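(* For every command $C$, every store $\sigma$ and every expectation $f$: (1) $\mathsf{ec}[C](\sigma)\le\mathsf{ect}[C](\mathbf{0})(\sigma)$; (2) $\mathsf{ev}[C](\sigma)(f)\le\mathsf{evt}[C](f)(\sigma)$.
   Context: Let $\mathrm{Var}$ be a finite set of integer-valued variables and $\Sigma = \mathrm{Var}\to\mathbb{Z}$ the set of stores; $\sigma[x\mapsto i]$ is the store updated at $x$. Boolean expressions $\varphi$ are evaluated on stores ($\sigma\models\varphi$). A distribution expression $d$ assigns to each store $\sigma$ a probability distribution $d(\sigma)$ on $\mathbb{Z}$. Commands: $C,D ::= \mathtt{skip} \mid \mathtt{tick}(r) \mid \mathtt{halt} \mid x :\approx d \mid \mathtt{if}_{[\psi]}(\varphi)\{C\}\{D\} \mid \mathtt{while}_{[\psi]}(\varphi)\{C\} \mid C \,\square\, D \mid C \oplus_p D \mid C;D$, with $r$ a nonnegative rational, $p\in[0,1]$. Expectations are functions $f:\Sigma\to[0,\infty]$, with pointwise operations, $\mathbf{r}$ the constant $r$ (so $\mathbf{0}$ is the zero function), $[\varphi](\sigma)\in\{0,1\}$ the indicator, $[c]=1$ if $c=\mathit{true}$ and $0$ otherwise, $0\cdot\infty=0$. Transformer $\mathsf{et}_c$ for $c\in\{\mathit{true},\mathit{false}\}$: $\mathsf{et}_c[\mathtt{skip}](f)=f$; $\mathsf{et}_c[\mathtt{tick}(r)](f)=[c]\cdot\mathbf{r}+f$; $\mathsf{et}_c[\mathtt{halt}](f)=\mathbf{0}$; $\mathsf{et}_c[x:\approx d](f)=\lambda\sigma.\sum_{i}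 d(\sigma)(i)\, f(\sigma[x\mapsto i])$; $\mathsf{et}_c[\mathtt{if}_{[\psi]}(\varphi)\{C\}\{D\}](f)=[\psi\wedge\varphi]\cdot\mathsf{et}_c[C](f)+[\psi\wedge\neg\varphi]\cdot\mathsf{et}_c[D](f)$; $\mathsf{et}_c[\mathtt{while}_{[\psi]}(\varphi)\{C\}](f)=\mathrm{lfp}\,F.\ [\psi\wedge\varphi]\cdot\mathsf{et}_c[C](F)+[\psi\wedge\neg\varphi]\cdot f$ (least fixed point, pointwise order); $\mathsf{et}_c[C\,\square\,D](f)=\max(\mathsf{et}_c[C](f),\mathsf{et}_c[D](f))$; $\mathsf{et}_c[C\oplus_p D](f)=\mathbf{p}\cdot\mathsf{et}_c[C](f)+\mathbf{(1-p)}\cdot\mathsf{et}_c[D](f)$; $\mathsf{et}_c[C;D](f)=\mathsf{et}_c[C](\mathsf{et}_c[D](f))$. Set $\mathsf{ect}[C]=\mathsf{et}_{\mathit{true}}[C]$ and $\mathsf{evt}[C]=\mathsf{et}_{\mathit{false}}[C]$. Configurations: $\mathrm{Conf}=(\mathrm{Cmd}\times\Sigma)\cup\Sigma\cup\{\bot\}$; an active configuration is written $\langle C,\sigma\rangle$. A multidistribution on a set $A$ is a countable multiset $\mu$ of pairs $q:a$ with $a\in A$, $0<q\le1$, and $\sum_{q:a\in\mu}q\le1$; $\mathbb{E}_\mu(g)=\sum_{q:a\in\mu}q\cdot g(a)$ (with multiplicity); the restriction $\mu|_P$ to $P\subseteq A$ keeps exactly the entries $q:a$ with $a\in P$. For $0<p\le1$,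 $p\cdot\{q_i:a_i\}_i=\{p q_i:a_i\}_i$, and for a countable family with $p_i>0$, $\sum_ip_i\le1$, $\biguplus_i p_i\cdot\mu_i$ is the multiset union of the $p_i\cdot\mu_i$. For $h:A\to B$, $\overline h(\{q_i:a_i\}_i)=\{q_i:h(a_i)\}_i$. A configuration $\gamma$ is identified with $\{1:\gamma\}$; entries with probability $0$ are omitted. The one-step relation $\gamma\to_w\mu$ is the least relation closed under: $\langle\mathtt{skip},\sigma\rangle\to_0\sigma$; $\langle\mathtt{tick}(r),\sigma\rangle\to_r\sigma$; $\langle\mathtt{halt},\sigma\rangle\to_0\bot$; $\langle x:\approx d,\sigma\rangle\to_0\{d(\sigma)(i):\sigma[x\mapsto i]\mid d(\sigma)(i)>0\}$; $\langle\mathtt{if}_{[\psi]}(\varphi)\{C\}\{D\},\sigma\rangle\to_0\langle C,\sigma\rangle$ if $\sigma\models\psi\wedge\varphi$, $\to_0\langle D,\sigma\rangle$ if $\sigma\models\psi\wedge\neg\varphi$, $\to_0\bot$ if $\sigma\models\neg\psi$; $\langle\mathtt{while}_{[\psi]}(\varphi)\{C\},\sigma\rangle\to_0\langle C;\mathtt{while}_{[\psi]}(\varphi)\{C\},\sigma\rangle$ if $\sigma\models\psi\wedge\varphi$, $\to_0\sigma$ if $\sigma\models\psi\wedge\neg\varphi$, $\to_0\bot$ if $\sigma\models\neg\psi$; $\langle C\,\square\,D,\sigma\rangle\to_0\langle C,\sigma\rangle$ and $\to_0\langle D,\sigma\rangle$; $\langle C\oplus_pD,\sigma\rangle\to_0\{p:\langle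 C,\sigma\rangle,1-p:\langle D,\sigma\rangle\}$; if $\langle C,\sigma\rangle\to_r\mu$ then $\langle C;D,\sigma\rangle\to_r\overline{\kappa_D}(\mu)$, where $\kappa_D(\langle C',\sigma'\rangle)=\langle C';D,\sigma'\rangle$, $\kappa_D(\sigma')=\langle D,\sigma'\rangle$, $\kappa_D(\bot)=\bot$. The lifted relation $\mu\Rightarrow_w\nu$ on multidistributions is the least relation with: $\mu\Rightarrow_0\mu$; $\{1:\gamma\}\Rightarrow_w\mu$ whenever $\gamma\to_w\mu$; and if $\mu_i\Rightarrow_{w_i}\nu_i$ for all $i$ in a countable index set $I$, $p_i>0$, $\sum_ip_i\le1$, then $\biguplus_ip_i\cdot\mu_i\Rightarrow_{w}\biguplus_ip_i\cdot\nu_i$ with $w=\sum_ip_iw_i$. The multi-step relation $\Rightarrow^w$ is the least relation with: $\mu\Rightarrow^0\mu$; $\mu\Rightarrow^w\nu$ whenever $\mu\Rightarrow_w\nu$; and $\mu\Rightarrow^{w_1+w_2}\nu$ whenever $\mu\Rightarrow^{w_1}\mu'$ and $\mu'\Rightarrow^{w_2}\nu$. The expected cost function is $\mathsf{ec}[C](\sigma)=\sup\{w\mid \{1:\langle C,\sigma\rangle\}\Rightarrow^w\mu\text{ for some }\mu\}$ and the expected value function is $\mathsf{ev}[C](\sigma)(f)=\sup\{\mathbb{E}_{\mu|_\Sigma}(f)\mid \{1:\langle C,\sigma\rangle\}\Rightarrow^w\mu\text{ for some }w,\mu\}$. *)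

From HB Require Import structures.
From mathcomp Require Import all_boot all_order all_algebra.
From mathcomp Require Import all_classical all_reals all_analysis.
Set Implicit Arguments. Unset Strict Implicit. Unset Printing Implicit Defensive.
Import Order.TTheory GRing.Theory Num.Theory.
Local Open Scope classical_set_scope.
Local Open Scope ring_scope.

Section Semantics.
Context {R : realType} {Var : finType}.

Definition store := Var -> int.
Definition upd (s : store) (x : Var) (i : int) : store :=
  fun y => if y == x then i else s y.
Definition bexp := store -> bool.

Record distr := Distr {
  pmf :> int -> R;
  pmf_ge0 : forall i, 0 <= pmf i;
  pmf_sum1 : (\esum_(i in [set: int]) (pmf i)%:E = 1)%E }.
Definition dexp := store -> distr.

Inductive cmd :=
| Skip
| Tick (r : rat) (hr : 0 <= r)
| Halt
| Assign (x : Var) (d : dexp)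
| Ite (psi phi : bexp) (C D : cmd)
| While (psi phi : bexp) (C : cmd)
| NDet (C D : cmd)
| Prob (p : R) (hp : 0 <= p <= 1) (C D : cmd)
| Seq (C D : cmd).

(* Expectations: functions Sigma -> [0, +oo], represented in \bar R. *)
Definition expect := store -> \bar R.

Local Open Scope ereal_scope.

Definition ind (b : bool) : \bar R := if b then 1 else 0.

(* Least fixed point in the complete lattice of [0,+oo]-valued functions
   ordered pointwise (Knaster-Tarski: meet of all pre-fixed points). *)
Definition lfp (Phi : expect -> expect) : expect :=
  fun s => ereal_inf [set F s | F in
     [set F : expect | (forall t, 0 <= F t) /\ (forall t, Phi F t <= F t)]].

Fixpoint et (c : bool) (C : cmd) (f : expect) {struct C} : expect :=
  match C with
  | Skip => f
  | Tick r _ => fun s => ind c * (ratr r)%:E + f s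
  | Halt => fun _ => 0
  | Assign x d => fun s =>
      \esum_(i in [set: int]) ((d s i)%:E * f (upd s x i))
  | Ite psi phi C1 C2 => fun s =>
      ind (psi s && phi s) * et c C1 f s + ind (psi s && ~~ phi s) * et c C2 f s
  | While psi phi C1 =>
      lfp (fun F s => ind (psi s && phi s) * et c C1 F s
                      + ind (psi s && ~~ phi s) * f s)
  | NDet C1 C2 => fun s => maxe (et c C1 f s) (et c C2 f s)
  | Prob p _ C1 C2 => fun s => p%:E * et c C1 f s + (1 - p)%R%:E * et c C2 f s
  | Seq C1 C2 => et c C1 (et c C2 f)
  end.

Definition ect := et true.
Definition evt := et false.

Inductive conf :=
| Active (C : cmd) (s : store)
| Term (s : store)
| Bot.

HB.instance Definition _ := gen_eqMixin conf.
HB.instance Definition _ := gen_choiceMixin conf.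

(* Countable multisets of pairs q:a, encoded by their multiplicity function:
   mu q a = number of copies of the entry q:a. *)
Definition mdist (A : Type) := R -> A -> nat.

Definition mempty {A} : mdist A := fun _ _ => 0%N.
Definition mdirac {A} (a : A) : mdist A :=
  fun q b => if `[< q = 1%R /\ b = a >] then 1%N else 0%N.
(* p . mu ; entries with probability 0 are omitted (p = 0 gives the empty multiset) *)
Definition mscale {A} (p : R) (mu : mdist A) : mdist A :=
  fun q b => if p == 0%R then 0%N else mu (q / p)%R b.
Definition madd {A} (mu nu : mdist A) : mdist A := fun q b => (mu q b + nu q b)%N.

Definition is_union {A} (p : nat -> R) (mus : nat -> mdist A) (nu : mdist A) :=
  forall q b, ((nu q b)%:R : R)%:E = \sum_(i <oo) (((mscale (p i) (mus i)) q b)%:R : R)%:E.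

Definition is_image {A B : choiceType} (h : A -> B) (mu : mdist A) (nu : mdist B) :=
  forall q b, ((nu q b)%:R : R)%:E = \esum_(a in [set a | h a = b]) ((mu q a)%:R : R)%:E.

Definition Expect {A : choiceType} (mu : mdist A) (g : A -> \bar R) : \bar R :=
  \esum_(x in [set: R * A]) ((((mu x.1 x.2)%:R * x.1)%R)%:E * g x.2).

Definition restrictS (mu : mdist conf) : mdist store := fun q s => mu q (Term s).

Definition kappa (D : cmd) (g : conf) : conf :=
  match g with
  | Active C' s => Active (Seq C' D) s
  | Term s => Active D s
  | Bot => Bot
  end.

Definition assign_md (x : Var) (d : dexp) (s : store) : mdist conf :=
  fun q a => if `[< exists i, (0 < d s i)%R /\ q = d s i /\ a = Term (upd s x i) >]
             then 1%N else 0%N.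

Inductive step : conf -> \bar R -> mdist conf -> Prop :=
| st_skip s : step (Active Skip s) 0 (mdirac (Term s))
| st_tick r hr s : step (Active (@Tick r hr) s) (ratr r)%:E (mdirac (Term s))
| st_halt s : step (Active Halt s) 0 (mdirac Bot)
| st_assign x d s : step (Active (Assign x d) s) 0 (assign_md x d s)
| st_if_t psi phi C D s : psi s && phi s ->
    step (Active (Ite psi phi C D) s) 0 (mdirac (Active C s))
| st_if_f psi phi C D s : psi s && ~~ phi s ->
    step (Active (Ite psi phi C D) s) 0 (mdirac (Active D s))
| st_if_bot psi phi C D s : ~~ psi s ->
    step (Active (Ite psi phi C D) s) 0 (mdirac Bot)
| st_while_t psi phi C s : psi s && phi s ->
    step (Active (While psi phi C) s) 0 (mdirac (Active (Seq C (While psi phi C)) s))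
| st_while_f psi phi C s : psi s && ~~ phi s ->
    step (Active (While psi phi C) s) 0 (mdirac (Term s))
| st_while_bot psi phi C s : ~~ psi s ->
    step (Active (While psi phi C) s) 0 (mdirac Bot)
| st_ndet_l C D s : step (Active (NDet C D) s) 0 (mdirac (Active C s))
| st_ndet_r C D s : step (Active (NDet C D) s) 0 (mdirac (Active D s))
| st_prob p hp C D s : step (Active (@Prob p hp C D) s) 0
    (madd (mscale p (mdirac (Active C s))) (mscale (1 - p)%R (mdirac (Active D s))))
| st_seq C D s w mu nu : step (Active C s) w mu -> is_image (kappa D) mu nu ->
    step (Active (Seq C D) s) w nu.

(* Lifted relation.  Countable index sets are represented by nat with
   weights p_i >= 0: indices with p_i = 0 contribute nothing. *)
Inductive lstep : mdist conf -> \bar R -> mdist conf -> Prop :=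
| ls_refl mu : lstep mu 0 mu
| ls_single g w mu : step g w mu -> lstep (mdirac g) w mu
| ls_union (p : nat -> R) (mus nus : nat -> mdist conf) (ws : nat -> \bar R)
    (mu nu : mdist conf) :
    (forall i, (0 <= p i)%R) ->
    \sum_(i <oo) (p i)%:E <= 1 ->
    (forall i, lstep (mus i) (ws i) (nus i)) ->
    is_union p mus mu -> is_union p nus nu ->
    lstep mu (\sum_(i <oo) ((p i)%:E * ws i)) nu.

Inductive msteps : mdist conf -> \bar R -> mdist conf -> Prop :=
| ms_refl mu : msteps mu 0 mu
| ms_one mu w nu : lstep mu w nu -> msteps mu w nu
| ms_trans mu w1 mu' w2 nu : msteps mu w1 mu' -> msteps mu' w2 nu ->
    msteps mu (w1 + w2) nu.

Definition ec (C : cmd) (s : store) : \bar R :=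
  ereal_sup [set w | exists mu, msteps (mdirac (Active C s)) w mu].

Definition ev (C : cmd) (s : store) (f : expect) : \bar R :=
  ereal_sup [set Expect (restrictS mu) f | mu in
               [set mu | exists w, msteps (mdirac (Active C s)) w mu]].

End Semantics.

From Pilot Require Import Defs.
From HB Require Import structures.
From mathcomp Require Import all_boot all_order all_algebra.
From mathcomp Require Import all_classical all_reals all_analysis.
Import Order.TTheory GRing.Theory Num.Theory.
Local Open Scope classical_set_scope.
Local Open Scope ring_scope.
Local Open Scope ereal_scope.

(* The transformer itself is a potential for the operational semantics.  Give
   an active configuration <C, s> the value et_c[C](f)(s), a terminated store s
   the value f(s) and bot the value 0, and lift this to multidistributions by
   weighted summation.  Every rule of the one-step relation pays its cost out of
   this potential (for loops because the least fixed point is a pre-fixed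
   point), and the bound survives weighted unions and the image under the
   sequencing context kappa_D.  Hence, along every run, the cost w plus the
   potential of the reached multidistribution is at most et_c[C](f)(s).  For
   c = true and f = 0 this bounds ec; for c = false the potential dominates the
   expected value of f on the terminated part. *)

Section esum_lemmas.
Context {R : realType}.

Lemma esumZl (T : choiceType) (S : set T) (a : T -> \bar R) (r : R) :
  (0 <= r)%R -> (forall x, 0 <= a x) ->
  \esum_(x in S) (r%:E * a x) = r%:E * \esum_(x in S) a x.
Proof.
move=> r0 a0; rewrite /esum -ereal_supZl //; last first.
  by apply/set0P; exists 0, set0; [exact: fsets_set0 | rewrite fsbig_set0].
congr ereal_sup; apply/seteqP; split => y /=.
- move=> [X XS <-]; exists (\sum_(x \in X) a x); first by exists X.
  by rewrite ge0_mule_fsumr.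
- by move=> [_ [X XS <-] <-]; exists X => //; rewrite ge0_mule_fsumr.
Qed.

Lemma le_term_esum (T : choiceType) (S : set T) (a : T -> \bar R) x :
  (forall x, 0 <= a x) -> S x -> a x <= \esum_(i in S) a i.
Proof.
move=> a0 Sx; apply: esum_ge; exists [set x].
  by split; [exact: finite_set1 | move=> y ->].
by rewrite fsbig_set1.
Qed.

Lemma ge0_esumMr (T : choiceType) (S : set T) (a : T -> \bar R) (K : \bar R) :
  (forall x, 0 <= a x) -> 0 <= K ->
  (\esum_(x in S) a x) * K = \esum_(x in S) (a x * K).
Proof.
move=> a0; case: K => [r|_|//].
  rewrite lee_fin => r0; rewrite muleC -esumZl //.
  by apply: eq_esum => x _; rewrite muleC.
have [a_eq0|] := pselect (forall x, S x -> a x = 0).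
  by rewrite esum1 // mul0e esum1 // => x Sx; rewrite a_eq0 // mul0e.
move=> /existsNP [x] /not_implyP [Sx] /eqP ax0.
have ax_gt0 : 0 < a x by rewrite lt_def ax0 a0.
rewrite muleC gt0_mulye; last by rewrite (lt_le_trans ax_gt0) // le_term_esum.
apply/eqP; rewrite eq_le leey /=.
have := @le_term_esum _ S (fun i => a i * +oo) x (fun y => mule_ge0 (a0 y) (leey _)) Sx.
by rewrite /= muleC gt0_mulye // => ->.
Qed.

Lemma ge0_nneseriesMr (a : nat -> \bar R) (K : \bar R) :
  (forall n, 0 <= a n) -> 0 <= K ->
  (\sum_(i <oo) a i) * K = \sum_(i <oo) (a i * K).
Proof.
move=> a0 K0; rewrite !nneseries_esumT //; first exact: ge0_esumMr.
by move=> n; rewrite mule_ge0.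
Qed.

Lemma esum_interchange (T1 T2 : choiceType) (a : T1 -> T2 -> \bar R) :
  (forall i j, 0 <= a i j) ->
  \esum_(i in [set: T1]) \esum_(j in [set: T2]) a i j =
  \esum_(j in [set: T2]) \esum_(i in [set: T1]) a i j.
Proof.
move=> a0; rewrite !esum_esum //.
rewrite (reindex_esum ([set: T2] `*`` (fun=> [set: T1])) _ (fun x => (x.2, x.1))) //.
split=> //=.
- by move=> [i1 i2] [j1 j2] /= _ _ [] -> ->.
- by move=> [i1 i2] _ /=; exists (i2, i1).
Qed.

Lemma le_esum_subset (T : choiceType) (A B : set T) (a : T -> \bar R) :
  (forall x, 0 <= a x) -> A `<=` B ->
  \esum_(x in A) a x <= \esum_(x in B) a x.
Proof.
move=> a0 AB; rewrite (esum_mkcond A) (esum_mkcond B); apply: le_esum => x _.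
case: ifPn => xA; last by case: ifP.
by rewrite ifT // inE; apply: AB; rewrite -inE.
Qed.

Lemma esumT_supp (T : choiceType) (A : set T) (a : T -> \bar R) :
  (forall x, ~ A x -> a x = 0) ->
  \esum_(x in [set: T]) a x = \esum_(x in A) a x.
Proof.
move=> a_out; rewrite (esum_mkcond A); apply: eq_esum => x _.
by case: ifPn => // /negP; rewrite inE => /a_out.
Qed.

End esum_lemmas.

Section least_fixed_point.
Context {R : realType} {Var : finType}.
Local Notation expect := (@expect R Var).
Implicit Types (Phi Xi : expect -> expect) (F G : expect).

Definition nonneg F := forall t, 0 <= F t.

Definition monotone_on_nonneg Phi :=
  forall F G, nonneg F -> (forall t, F t <= G t) -> forall t, Phi F t <= Phi G t.

Lemma lfp_ge0 Phi : nonneg (lfp Phi).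
Proof. by move=> s; apply/ereal_infP => _ [F [F0 _] <-]. Qed.

Lemma lfp_le_prefixed Phi F :
  nonneg F -> (forall t, Phi F t <= F t) -> forall t, lfp Phi t <= F t.
Proof. by move=> F0 PhiF t; apply: ereal_inf_lbound; exists F. Qed.

Lemma le_lfp Phi Xi :
  (forall F, nonneg F -> forall t, Phi F t <= Xi F t) ->
  forall t, lfp Phi t <= lfp Xi t.
Proof.
move=> le_Phi t; apply/ereal_infP => _ /= [F [F0 PhiF] <-].
apply: (lfp_le_prefixed _ _ F0) => u.
exact: le_trans (le_Phi F F0 u) (PhiF u).
Qed.

Lemma lfp_prefixed Phi :
  monotone_on_nonneg Phi -> forall t, Phi (lfp Phi) t <= lfp Phi t.
Proof.
move=> Phi_mono t; apply/ereal_infP => _ [F [F0 PhiF] <-].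
apply: le_trans (PhiF t); apply: Phi_mono; first exact: lfp_ge0.
exact: lfp_le_prefixed.
Qed.

End least_fixed_point.

Section positive_expectation.
Context {R : realType}.

(* [Expect] with every weight [q] replaced by [max q 0]: entries with [q <= 0]
   never arise from the semantics, and truncating them makes the potential
   nonnegative without having to carry that invariant around. *)
Definition Expect_pos {A : choiceType} (mu : @Defs.mdist R A) (g : A -> \bar R) :
    \bar R :=
  \esum_(x in [set: R * A]) (((mu x.1 x.2)%:R * Num.max x.1 0)%R%:E * g x.2).

Lemma weight_ge0 (n : nat) (q : R) : (0 <= n%:R * Num.max q 0)%R.
Proof. by rewrite mulr_ge0 // le_max lexx orbT. Qed.

Lemma Expect_pos_term_ge0 (n : nat) (q : R) (y : \bar R) :
  0 <= y -> 0 <= (n%:R * Num.max q 0)%R%:E * y.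
Proof. by move=> y0; rewrite mule_ge0 // lee_fin weight_ge0. Qed.

Lemma Expect_pos_ge0 {A : choiceType} (mu : @Defs.mdist R A) g :
  (forall a, 0 <= g a) -> 0 <= Expect_pos mu g.
Proof. by move=> g0; apply: esum_ge0 => x _; exact/Expect_pos_term_ge0/g0. Qed.

Lemma Expect_pos_dirac {A : choiceType} (a : A) g :
  0 <= g a -> Expect_pos (mdirac a) g = g a.
Proof.
move=> ga0; rewrite /Expect_pos (@esumT_supp _ _ [set (1%R, a)]); last first.
  move=> [q b] /= qb_ne; rewrite /mdirac asboolF ?mul0r ?mul0e //.
  by move=> [q1 ba]; apply: qb_ne; rewrite q1 ba.
rewrite esum_set1 /=; last exact: Expect_pos_term_ge0.
by rewrite /mdirac asboolT // mul1r max_l ?ler01 // mul1e.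
Qed.

Lemma Expect_posZ {A : choiceType} (mu : @Defs.mdist R A) (p : R) g :
  (0 <= p)%R -> (forall a, 0 <= g a) ->
  Expect_pos (Defs.mscale p mu) g = p%:E * Expect_pos mu g.
Proof.
move=> p0 g0; have [->|p_neq0] := eqVneq p 0%R.
  rewrite mul0e /Expect_pos esum1 // => x _.
  by rewrite /Defs.mscale eqxx mul0r mul0e.
rewrite /Expect_pos (reindex_esum [set: R * A] [set: R * A] (fun x => (p * x.1, x.2)%R)).
  rewrite -esumZl //; last by move=> x; exact/Expect_pos_term_ge0/g0.
  apply: eq_esum => [[q b]] _ /=.
  rewrite /Defs.mscale (negbTE p_neq0) [(p * q / p)%R]mulrC mulKf //.
  by rewrite muleA -EFinM mulrCA [in RHS]maxr_pMr // mulr0.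
split=> //=.
- by move=> [q1 b1] [q2 b2] _ _ /= [/(mulfI p_neq0) -> ->].
- by move=> [q b] _; exists ((q / p)%R, b) => //=; rewrite mulrC divfK.
Qed.

Lemma Expect_posD {A : choiceType} (mu nu : @Defs.mdist R A) g :
  (forall a, 0 <= g a) -> Expect_pos (madd mu nu) g = Expect_pos mu g + Expect_pos nu g.
Proof.
move=> g0; rewrite /Expect_pos -esumD; last 2 first.
- by move=> x _; exact/Expect_pos_term_ge0/g0.
- by move=> x _; exact/Expect_pos_term_ge0/g0.
apply: eq_esum => [[q b]] _ /=.
by rewrite /madd natrD mulrDl EFinD ge0_muleDl // lee_fin weight_ge0.
Qed.

Lemma Expect_pos_union {A : choiceType} (p : nat -> R) (mus : nat -> @Defs.mdist R A)
    (nu : @Defs.mdist R A) g :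
  (forall i, 0 <= p i)%R -> (forall a, 0 <= g a) -> is_union p mus nu ->
  Expect_pos nu g = \sum_(i <oo) ((p i)%:E * Expect_pos (mus i) g).
Proof.
move=> p0 g0 nu_union.
have w_ge0 (q : R) (b : A) : 0 <= (Num.max q 0)%:E * g b.
  by rewrite mule_ge0 // lee_fin le_max lexx orbT.
transitivity (\sum_(i <oo) Expect_pos (Defs.mscale (p i) (mus i)) g); last first.
  by apply: eq_eseriesr => i _; rewrite Expect_posZ.
rewrite /Expect_pos (eq_esum (b := fun x => \esum_(i in [set: nat])
   ((((Defs.mscale (p i) (mus i)) x.1 x.2)%:R : R)%:E *
    ((Num.max x.1 0)%:E * g x.2)))); last first.
  move=> [q b] _ /=; rewrite EFinM -muleA nu_union ge0_nneseriesMr //.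
  by rewrite nneseries_esumT // => n; rewrite mule_ge0 // lee_fin.
rewrite esum_interchange; last by move=> [q b] i; rewrite mule_ge0 // lee_fin.
rewrite nneseries_esumT; last by move=> n; apply: Expect_pos_ge0.
by apply: eq_esum => i _; apply: eq_esum => [[q b]] _ /=; rewrite EFinM muleA.
Qed.

Lemma Expect_pos_image {A B : choiceType} (h : A -> B) (mu : @Defs.mdist R A)
    (nu : @Defs.mdist R B) (g : B -> \bar R) :
  (forall b, 0 <= g b) -> is_image h mu nu -> Expect_pos nu g = Expect_pos mu (g \o h).
Proof.
move=> g0 nu_image.
have w_ge0 (q : R) (b : B) : 0 <= (Num.max q 0)%:E * g b.
  by rewrite mule_ge0 // lee_fin le_max lexx orbT.
rewrite /Expect_pos (eq_esum (b := fun x => \esum_(a in [set a | h a = x.2])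
     (((mu x.1 a)%:R : R)%:E * ((Num.max x.1 0)%:E * g x.2)))); last first.
  by move=> [q b] _ /=; rewrite EFinM -muleA nu_image ge0_esumMr.
rewrite esum_esum; last by move=> [q b] a _ _; rewrite mule_ge0 // lee_fin.
rewrite (reindex_esum [set: R * A] _ (fun x => ((x.1, h x.2), x.2))).
  by apply: eq_esum => [[q a]] _ /=; rewrite EFinM muleA.
split.
- by move=> [q a] _ /=.
- by move=> [q1 a1] [q2 a2] _ _ /= [-> _ ->].
- by move=> [[q b] a] [_ /= hab]; exists (q, a) => //=; rewrite hab.
Qed.

Lemma Expect_le_Expect_pos {A : choiceType} (mu : @Defs.mdist R A) (g : A -> \bar R) :
  (forall a, 0 <= g a) -> Expect mu g <= Expect_pos mu g.
Proof.
move=> g0; apply: le_esum => -[q a] _ /=; apply: lee_wpmul2r => //.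
by rewrite lee_fin ler_wpM2l // le_max lexx.
Qed.

End positive_expectation.

Section soundness.
Context {R : realType} {Var : finType}.
Local Notation cmd := (@cmd R Var).
Local Notation conf := (@conf R Var).
Local Notation expect := (@expect R Var).
Local Notation store := (@store Var).
Local Notation mdist := (@Defs.mdist R conf).
Implicit Types (c : bool) (C : cmd) (f : expect) (s : store).

Definition conf_et c f (g : conf) : \bar R :=
  match g with Active C s => et c C f s | Term s => f s | Bot => 0 end.

Lemma ind_ge0 b : 0 <= (ind b : \bar R).
Proof. by case: b; rewrite /= ?lee01. Qed.

Lemma et_ge0 c C f : nonneg f -> nonneg (et c C f).
Proof.
elim: C f => [|r hr||x d|psi ph C1 IH1 C2 IH2|psi ph C1 IH1|C1 IH1 C2 IH2
             |p /andP[p0 p1] C1 IH1 C2 IH2|C1 IH1 C2 IH2] f f0 s /=.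
- exact: f0.
- by rewrite adde_ge0 // mule_ge0 ?ind_ge0 // lee_fin ler0q.
- by [].
- by apply: esum_ge0 => i _; rewrite mule_ge0 // lee_fin Defs.pmf_ge0.
- by rewrite adde_ge0 // mule_ge0 ?ind_ge0 ?IH1 ?IH2.
- exact: lfp_ge0.
- by rewrite le_max IH1.
- by rewrite adde_ge0 // mule_ge0 ?lee_fin ?subr_ge0 ?IH1 ?IH2.
- exact/IH1/IH2.
Qed.

Lemma conf_et_ge0 c f : nonneg f -> forall g, 0 <= conf_et c f g.
Proof. by move=> f0 [C s|s|] /=; rewrite ?et_ge0. Qed.

Lemma et_monotone c C : monotone_on_nonneg (et c C).
Proof.
elim: C => [|r hr||x d|psi ph C1 IH1 C2 IH2|psi ph C1 IH1|C1 IH1 C2 IH2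
           |p /andP[p0 p1] C1 IH1 C2 IH2|C1 IH1 C2 IH2] f g f0 fg s /=.
- exact: fg.
- exact: leeD.
- by [].
- apply: le_esum => i _.
  by apply: lee_wpmul2l; [rewrite lee_fin Defs.pmf_ge0 | exact: fg].
- by apply: leeD; apply: lee_wpmul2l; rewrite ?ind_ge0 ?IH1 ?IH2.
- apply: le_lfp => F F0 t; apply: leeD => //.
  by apply: lee_wpmul2l; [exact: ind_ge0 | exact: fg].
- by rewrite ge_max !le_max !IH1 ?IH2 ?orbT.
- by apply: leeD; apply: lee_wpmul2l; rewrite ?lee_fin ?subr_ge0 ?IH1 ?IH2.
- by apply: IH1 => [|t]; [exact: et_ge0 | exact: IH2].
Qed.

Lemma et_while_unfold c psi ph C f : nonneg f -> forall s,
  ind (psi s && ph s) * et c C (et c (While psi ph C) f) s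
    + ind (psi s && ~~ ph s) * f s <= et c (While psi ph C) f s.
Proof.
move=> f0; apply: lfp_prefixed => F G F0 FG s; apply: leeD => //.
by apply: lee_wpmul2l; [exact: ind_ge0 | exact: et_monotone].
Qed.

Lemma Expect_pos_assign x d s (g : conf -> \bar R) : (forall a, 0 <= g a) ->
  Expect_pos (assign_md x d s) g <=
    \esum_(i in [set: int]) ((d s i)%:E * g (Term (upd s x i))).
Proof.
move=> g0.
pose e i := (d s i, @Term R Var (upd s x i)).
pose P := [set i : int | (0 < d s i)%R].
rewrite /Expect_pos (@esumT_supp _ _ (e @` P)); last first.
  move=> [q a] not_img /=; rewrite /assign_md asboolF ?mul0r ?mul0e //.
  by move=> [i [di [qe ae]]]; apply: not_img; exists i => //; rewrite /e qe ae.
rewrite esum_image; last first.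
  move=> i j _ _ [_ /(congr1 (fun t : store => t x))].
  by rewrite /upd !eqxx.
have terms_ge0 i : 0 <= (d s i)%:E * g (Term (upd s x i)).
  by rewrite mule_ge0 // lee_fin Defs.pmf_ge0.
apply: (@le_trans _ _ (\esum_(i in P) ((d s i)%:E * g (Term (upd s x i)))));
  last exact: le_esum_subset.
apply: le_esum => i Pi /=.
rewrite /assign_md asboolT; last by exists i.
by rewrite mul1r max_l // ltW.
Qed.

Lemma step_sound c (g : conf) w (mu : mdist) : step g w mu ->
  forall f, nonneg f -> ind c * w + Expect_pos mu (conf_et c f) <= conf_et c f g.
Proof.
have dirac_sound (g' : conf) f : nonneg f ->
    ind c * 0 + Expect_pos (mdirac g') (conf_et c f) = conf_et c f g'.
  by move=> f0; rewrite Expect_pos_dirac ?conf_et_ge0 // mule0 add0e.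
elim=> {g w mu} [s|r hr s|s|x d s|psi ph C D s H|psi ph C D s H|psi ph C D s H
               |psi ph C s H|psi ph C s H|psi ph C s H|C D s|C D s|p hp C D s
               |C D s w mu nu _ IH nu_image] f f0.
- by rewrite dirac_sound.
- by rewrite Expect_pos_dirac ?conf_et_ge0.
- by rewrite dirac_sound.
- by rewrite mule0 add0e Expect_pos_assign //; exact: conf_et_ge0.
- by rewrite dirac_sound //=; case/andP: H => -> ->; rewrite mul1e mul0e adde0.
- by rewrite dirac_sound //=; case/andP: H => -> /negbTE ->; rewrite mul1e mul0e add0e.
- by rewrite dirac_sound //= (negbTE H) !mul0e adde0.
- rewrite dirac_sound //; apply: le_trans _ (et_while_unfold _ _ _ _ _ f0 s).
  by case/andP: H => -> ->; rewrite mul1e mul0e adde0.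
- rewrite dirac_sound //; apply: le_trans _ (et_while_unfold _ _ _ _ _ f0 s).
  by case/andP: H => -> /negbTE ->; rewrite mul1e mul0e add0e.
- by rewrite dirac_sound //; exact: et_ge0.
- by rewrite dirac_sound //= le_max lexx.
- by rewrite dirac_sound //= le_max lexx orbT.
- have /andP[p0 p1] := hp; have g0 := conf_et_ge0 c f f0.
  by rewrite mule0 add0e Expect_posD // !Expect_posZ ?subr_ge0 // !Expect_pos_dirac.
- rewrite (Expect_pos_image _ _ _ _ (conf_et_ge0 c f f0) nu_image).
  have -> : conf_et c f \o kappa D = conf_et c (et c D f) by apply: funext => -[].
  exact/IH/et_ge0.
Qed.

Lemma step_cost_ge0 (g : conf) w (mu : mdist) : step g w mu -> 0 <= w.
Proof. by elim=> // r hr s; rewrite lee_fin ler0q. Qed.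

Lemma lstep_cost_ge0 (mu : mdist) w nu : lstep mu w nu -> 0 <= w.
Proof.
elim=> [//|g w' mu' /step_cost_ge0 //|p mus nus ws mu' nu' p0 _ _ ws0 _ _].
by apply: nneseries_ge0 => i _ _; rewrite mule_ge0 ?lee_fin ?ws0.
Qed.

Lemma lstep_sound c f (mu : mdist) w nu : nonneg f -> lstep mu w nu ->
  ind c * w + Expect_pos nu (conf_et c f) <= Expect_pos mu (conf_et c f).
Proof.
move=> f0; have g0 := conf_et_ge0 c f f0.
have E0 (m : mdist) : 0 <= Expect_pos m (conf_et c f) by exact: Expect_pos_ge0.
elim=> {mu w nu} [mu|g w mu /step_sound|p mus nus ws mu nu p0 _ steps IH mu_u nu_u].
- by rewrite mule0 add0e.
- by rewrite Expect_pos_dirac //; apply.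
rewrite (Expect_pos_union _ _ _ _ p0 g0 mu_u)
        (Expect_pos_union _ _ _ _ p0 g0 nu_u).
have ws0 i : 0 <= ws i := lstep_cost_ge0 _ _ _ (steps i).
case: c {g0} E0 IH => E0 IH /=.
- rewrite mul1e -nneseriesD; last 2 first.
  + by move=> i _ _; rewrite mule_ge0 ?lee_fin.
  + by move=> i _ _; rewrite mule_ge0 ?lee_fin ?E0.
  apply: lee_nneseries => [i _ _|i _].
    by rewrite adde_ge0 ?mule_ge0 ?lee_fin ?E0.
  rewrite -ge0_muleDr ?E0 //; apply: lee_wpmul2l; first by rewrite lee_fin.
  by have := IH i; rewrite mul1e.
- rewrite mul0e add0e; apply: lee_nneseries => [i _ _|i _].
    by rewrite mule_ge0 ?lee_fin ?E0.
  apply: lee_wpmul2l; first by rewrite lee_fin.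
  by have := IH i; rewrite mul0e add0e.
Qed.

Lemma msteps_sound c f (mu : mdist) w nu : nonneg f -> msteps mu w nu ->
  ind c * w + Expect_pos nu (conf_et c f) <= Expect_pos mu (conf_et c f).
Proof.
move=> f0; elim=> {mu w nu} [mu|mu w nu|mu w1 mu' w2 nu _ IH1 _ IH2].
- by rewrite mule0 add0e.
- exact: lstep_sound.
have -> : ind c * (w1 + w2) = ind c * w1 + ind c * w2.
  by case: c {IH1 IH2} => /=; rewrite ?mul1e ?mul0e ?adde0.
by rewrite -addeA; apply: le_trans IH1; exact: leeD.
Qed.

Lemma Expect_pos_restrictS c f (mu : mdist) : nonneg f ->
  Expect_pos (restrictS mu) f <= Expect_pos mu (conf_et c f).
Proof.
move=> f0; rewrite /Expect_pos.
rewrite -(esum_image _ (fun x : R * store => (x.1, @Term R Var x.2))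
  (fun y => ((mu y.1 y.2)%:R * Num.max y.1 0)%R%:E * conf_et c f y.2)); last first.
  by move=> [q1 t1] [q2 t2] _ _ /= [-> ->].
by apply: le_esum_subset => // x; apply: Expect_pos_term_ge0; exact: conf_et_ge0.
Qed.

End soundness.

Theorem mainTheorem6 (R : realType) (Var : finType) (C : @cmd R Var)
    (s : @store Var) (f : @expect R Var) :
  (forall t, 0 <= f t) ->
  ec C s <= ect C (fun _ => 0) s /\ ev C s f <= evt C f s.
Proof.
move=> f0; have zero0 : @nonneg R Var (fun=> 0) by [].
split; apply: ge_ereal_sup.
- move=> w [mu /(msteps_sound true _ _ _ _ zero0)].
  rewrite Expect_pos_dirac ?conf_et_ge0 //= mul1e; apply: le_trans; apply: leeDl.
  exact/Expect_pos_ge0/conf_et_ge0.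
- move=> _ [mu [w steps] <-]; have := msteps_sound false _ _ _ _ f0 steps.
  rewrite Expect_pos_dirac ?conf_et_ge0 //= mul0e add0e; apply: le_trans.
  exact: le_trans (Expect_le_Expect_pos _ _ f0) (Expect_pos_restrictS false _ _ f0).
Qed.
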